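(* Let $K$ be an $n$-dimensional oriented, well-centered, manifold-like simplicial complex with boundary $\partial K$ and circumcentric dual complex, and let $p,q$ be positive integers with $p+q=n+1$. Let $\mathcal F^d_{p,q}=\Omega_d^p(\star_{\mathrm i}K)\times\Omega_d^q(K)\times\Omega_d^{n-p}(\partial K)$ and $\mathcal E^d_{p,q}=\Omega_d^{n-p}(K)\times\Omega_d^{n-q}(\star_{\mathrm i}K)\times\Omega_d^{n-q}(\partial(\star K))$, with the symmetric bilinear form on $\mathcal F^d_{p,q}\times\mathcal E^d_{p,q}$ $$\langle\!\langle(\hat f_p^1,f_q^1,f_b^1,e_p^1,\hat e_q^1,\hat e_b^1),(\hat f_p^2,f_q^2,f_b^2,e_p^2,\hat e_q^2,\hat e_b^2)\rangle\!\rangle_d=\langle e_p^1\wedge\hat f_p^2+\hat e_q^1\wedge f_q^2+e_p^2\wedge\hat f_p^1+\hat e_q^2\wedge f_q^1,K\rangle+\langle\hat e_b^1\wedge f_b^2+\hat e_b^2\wedge f_b^1,\partial K\rangle .$$ Define $\mathcal D_d\subset\mathcal F^d_{p,q}\times\mathcal E^d_{p,q}$ as the set of $(\hat f_p,f_q,f_b,e_p,\hat e_q,\hat e_b)$ such that $$\hat f_p=(-1)^{pq+1}\big(\mathbf d_{\mathrm i}\hat e_q+\mathbf d_{\mathrm b}\hat e_b\big),\qquad f_q=\mathbf d e_p,\qquad f_b=(-1)^p\,e_p|_{\partial K}.$$ Then $\mathcal D_d=\mathcal D_d^{\perp}$ (orthogonal complement with respect to $\langle\!\langle\cdot,\cdot\rangle\!\rangle_d$),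 i.e. $\mathcal D_d$ is a Dirac structure.
   Context: Setting. $K$ is an $n$-dimensional manifold-like simplicial complex (every simplex is a face of some $n$-simplex), oriented ($n$-simplices sharing an $(n-1)$-face are coherently oriented, lower-dimensional simplices are individually oriented) and well-centered (every simplex contains its circumcenter in its interior). $\partial K$ is the $(n-1)$-dimensional boundary subcomplex: the $(n-1)$-simplices that are faces of exactly one $n$-simplex, together with all their faces. For simplices $\sigma^{j-1}\prec\sigma^{j}$ let $[\sigma^{j-1}:\sigma^{j}]\in\{\pm1\}$ be the coefficient of $\sigma^{j-1}$ in the simplicial boundary $\partial[v_0,\dots,v_j]=\sum_i(-1)^i[v_0,\dots,\widehat{v_i},\dots,v_j]$. Dual cells. Each simplex $\sigma^j\in K$ has a circumcentric interior dual $(n-j)$-cell $\star_{\mathrm i}\sigma^j$; each $\tau^j\in\partial K$ has a boundary dual $(n-1-j)$-cell $\star_{\mathrm b}\tau^j$ (its circumcentric dual within $\partial K$). Discrete forms. $\Omega_d^j(K)$ (resp. $\Omega_d^j(\partial K)$): real functions on the $j$-simplices of $K$ (resp. $\partial K$); $\Omega_d^m(\star_{\mathrm i}K)$: real functions on interior dual $m$-cells $\star_{\mathrm i}\sigma^{n-m}$; $\Omega_d^m(\partial(\star K))$: real functions on boundary dual $m$-cells $\star_{\mathrm b}\tau^{n-1-m}$, $\tau\in\partial K$. For primal $\alpha$, $\alpha|_{\partial K}$ is its restriction to simplices of $\partial K$. Derivatives. Primal: $(\mathbf d\alpha)(\sigma^{j})=\sum_{\sigma^{j-1}\prec\sigma^{j}}[\sigma^{j-1}:\sigma^{j}]\alpha(\sigma^{j-1})$.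 Dual: for $\hat\beta_{\mathrm i}\in\Omega_d^{m}(\star_{\mathrm i}K)$, $\hat\beta_{\mathrm b}\in\Omega_d^{m}(\partial(\star K))$, $m\le n-1$, with $j=n-m$: $(\mathbf d_{\mathrm i}\hat\beta_{\mathrm i})(\star_{\mathrm i}\sigma^{j-1})=(-1)^{j}\sum_{\sigma^{j}\succ\sigma^{j-1}}[\sigma^{j-1}:\sigma^{j}]\hat\beta_{\mathrm i}(\star_{\mathrm i}\sigma^{j})$, and $(\mathbf d_{\mathrm b}\hat\beta_{\mathrm b})(\star_{\mathrm i}\sigma^{j-1})=(-1)^{j-1}\hat\beta_{\mathrm b}(\star_{\mathrm b}\sigma^{j-1})$ if $\sigma^{j-1}\in\partial K$, $0$ otherwise; both lie in $\Omega_d^{m+1}(\star_{\mathrm i}K)$. Wedge pairings (extended bilinearly, so $\langle a+b,K\rangle=\langle a,K\rangle+\langle b,K\rangle$). For $\alpha\in\Omega_d^j(K)$, $\hat\beta\in\Omega_d^{n-j}(\star_{\mathrm i}K)$: $\langle\alpha\wedge\hat\beta,K\rangle=\sum_{\sigma^j\in K}\alpha(\sigma^j)\hat\beta(\star_{\mathrm i}\sigma^j)$, $\langle\hat\beta\wedge\alpha,K\rangle=(-1)^{j(n-j)}\langle\alpha\wedge\hat\beta,K\rangle$. For $\alpha\in\Omega_d^j(\partial K)$, $\hat\gamma\in\Omega_d^{n-1-j}(\partial(\star K))$: $\langle\alpha\wedge\hat\gamma,\partial K\rangle=\sum_{\tau^j\in\partial K}\alpha(\tau^j)\hat\gamma(\star_{\mathrm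 b}\tau^j)$, $\langle\hat\gamma\wedge\alpha,\partial K\rangle=(-1)^{j(n-1-j)}\langle\alpha\wedge\hat\gamma,\partial K\rangle$. A Dirac structure is a linear subspace $\mathcal D\subset\mathcal F\times\mathcal E$ with $\mathcal D=\mathcal D^\perp$ for the given symmetric bilinear form. *)

From HB Require Import structures.
From mathcomp Require Import all_boot all_order all_algebra.
From mathcomp Require Import reals.
Set Implicit Arguments.
Unset Strict Implicit.
Unset Printing Implicit Defensive.
Import Order.TTheory GRing.Theory Num.Theory.
Local Open Scope ring_scope.

Section DEC.
Variables (R : realType) (N : nat).

(* Vertices are 'I_N; a simplex is its (nonempty) vertex set; a j-simplex has
   j+1 vertices.  A discrete form (primal, interior-dual or boundary-dual) is a
   real function on simplices: a primal j-form is evaluated on j-simplices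
   sigma, an interior dual m-form on the dual cells *_i sigma^(n-m) (hence is
   indexed by sigma^(n-m)), a boundary dual m-form on *_b tau^(n-1-m), tau in
   dK (indexed by tau).  Values off the relevant index set are irrelevant. *)
Local Notation simplex := {set 'I_N}.
Definition form := {set 'I_N} -> R.
Local Notation cplx := {set {set 'I_N}}.

Definition simplicial_complex (K : cplx) : Prop :=
  (forall s : simplex, s \in K -> s != set0) /\
  (forall s t : simplex, s \in K -> t \subset s -> t != set0 -> t \in K).

Definition manifold_like (n : nat) (K : cplx) : Prop :=
  K != set0 /\
  forall s : simplex, s \in K -> exists2 S : simplex, S \in K & (#|S| = n.+1)%N /\ s \subset S.

Definition facet (t s : simplex) : bool := (t \subset s) && (#|s| == #|t|.+1)%N.

(* An orientation of every simplex, given relative to the increasing vertex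
   order: [o s = true] means s is oriented opposite to [v0 < v1 < ... < vj]. *)
Definition orientation := simplex -> bool.

Definition osign (b : bool) : R := if b then -1 else 1.

(* position in s (in increasing order) of the vertex of s not in t *)
Definition rem_index (t s : simplex) : nat :=
  #|[set v in s | [exists w in s :\: t, (val v < val w)%N]]|.

(* [t : s] = coefficient of t in the simplicial boundary of s, for t a facet
   of s, with orientations o:
   d[v0..vj] = sum_i (-1)^i [v0..^vi..vj]. *)
Definition incidence (o : orientation) (t s : simplex) : R :=
  osign (o t) * osign (o s) * (-1) ^+ rem_index t s.

(* Oriented: n-simplices sharing an (n-1)-face are coherently oriented, i.e.
   they induce opposite orientations on the common face. *)
Definition coherently_oriented (n : nat) (K : cplx) (o : orientation) : Prop :=
  forall t s1 s2 : simplex, t \in K -> s1 \in K -> s2 \in K ->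
    (#|s1| = n.+1)%N -> (#|s2| = n.+1)%N -> s1 != s2 ->
    facet t s1 -> facet t s2 ->
    incidence o t s1 = - incidence o t s2.

(* Boundary subcomplex dK: (n-1)-simplices that are faces of exactly one
   n-simplex, together with all their (nonempty) faces. *)
Definition bnd (n : nat) (K : cplx) : cplx :=
  [set t : simplex | (t != set0) &&
    [exists r : simplex, [&& r \in K, #|r| == n, t \subset r &
        #|[set S in K | (#|S| == n.+1) && (r \subset S)]| == 1]]]%N.

Variable m : nat.
Definition embedding := 'I_N -> 'rV[R]_m.

Definition sqdist (x y : 'rV[R]_m) : R := \sum_(i < m) (x 0 i - y 0 i) ^+ 2.

Definition bary (x : embedding) (s : simplex) (l : 'I_N -> R) : 'rV[R]_m :=
  \sum_(v in s) l v *: x v.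

Definition aff_indep (x : embedding) (s : simplex) : Prop :=
  forall mu : 'I_N -> R, \sum_(v in s) mu v = 0 -> bary x s mu = 0 ->
    forall v, v \in s -> mu v = 0.

Definition in_closed_simplex (x : embedding) (s : simplex) (c : 'rV[R]_m) :=
  exists l : 'I_N -> R, [/\ forall v, v \in s -> 0 <= l v,
    \sum_(v in s) l v = 1 & c = bary x s l].

Definition geometric (x : embedding) (K : cplx) : Prop :=
  (forall s : simplex, s \in K -> aff_indep x s) /\
  (forall (s t : simplex) c, s \in K -> t \in K -> in_closed_simplex x s c ->
     in_closed_simplex x t c -> in_closed_simplex x (s :&: t) c).

(* well-centered: the circumcenter (the point of the affine hull equidistant
   from all vertices) lies in the interior (all barycentric coordinates > 0) *)
Definition well_centered (x : embedding) (K : cplx) : Prop :=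
  forall s : simplex, s \in K -> exists l : 'I_N -> R,
    [/\ forall v, v \in s -> 0 < l v, \sum_(v in s) l v = 1 &
        exists r, forall v, v \in s -> sqdist (bary x s l) (x v) = r].

Variables (n : nat) (K : cplx) (o : orientation).

Definition dprim (a : form) : form := fun s =>
  \sum_(t in K | facet t s) incidence o t s * a t.

(* interior dual derivative: (d_i b)( *_i t^(j-1)) with j = #|t| *)
Definition d_i (b : form) : form := fun t =>
  (-1) ^+ #|t| * \sum_(s in K | facet t s) incidence o t s * b s.

Definition d_b (b : form) : form := fun t =>
  if t \in bnd n K then (-1) ^+ (#|t|.-1) * b t else 0.

(* <alpha /\ beta^, K> for alpha a primal j-form *)
Definition wedgeK (j : nat) (a b : form) : R :=
  \sum_(s in K | #|s| == j.+1) a s * b s.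
(* <beta^ /\ alpha, K> for alpha a primal j-form *)
Definition wedgeK_dual (j : nat) (b a : form) : R :=
  (-1) ^+ (j * (n - j)) * wedgeK j a b.
(* <alpha /\ gamma^, dK> for alpha a primal j-form on dK *)
Definition wedgeB (j : nat) (a g : form) : R :=
  \sum_(t in bnd n K | #|t| == j.+1) a t * g t.
(* <gamma^ /\ alpha, dK> *)
Definition wedgeB_dual (j : nat) (g a : form) : R :=
  (-1) ^+ (j * (n.-1 - j)) * wedgeB j a g.

(* elements of F^d_{p,q} x E^d_{p,q} *)
Record port := Port {
  fp : form;  (* Omega^p( *_i K)      *)
  fq : form;  (* Omega^q(K)          *)
  fb : form;  (* Omega^(n-p)(dK)     *)
  ep : form;  (* Omega^(n-p)(K)      *)
  eq : form;  (* Omega^(n-q)( *_i K)  *)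
  eb : form   (* Omega^(n-q)(d( *K))  *)
}.

Variables p q : nat.

Definition pairing (x y : port) : R :=
  (wedgeK (n - p) (ep x) (fp y) + wedgeK_dual q (eq x) (fq y)
   + wedgeK (n - p) (ep y) (fp x) + wedgeK_dual q (eq y) (fq x))
  + (wedgeB_dual (n - p) (eb x) (fb y) + wedgeB_dual (n - p) (eb y) (fb x)).

Definition Dd (x : port) : Prop :=
  [/\ forall s : simplex, s \in K -> (#|s| = (n - p).+1)%N ->
        fp x s = (-1) ^+ (p * q + 1) * (d_i (eq x) s + d_b (eb x) s),
      forall s : simplex, s \in K -> (#|s| = q.+1)%N -> fq x s = dprim (ep x) s &
      forall t : simplex, t \in bnd n K -> (#|t| = (n - p).+1)%N ->
        fb x t = (-1) ^+ p * ep x t].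

End DEC.

Definition dirac_structure (T R : Type) (zero : R) (D : T -> Prop)
  (B : T -> T -> R) : Prop :=
  forall y, D y <-> (forall x, D x -> B x y = zero).

From Pilot Require Import Defs.
From HB Require Import structures.
From mathcomp Require Import all_boot all_order all_algebra.
From mathcomp Require Import reals.
From mathcomp Require Import ring zify.
Set Implicit Arguments.
Unset Strict Implicit.
Unset Printing Implicit Defensive.
Import Order.TTheory GRing.Theory Num.Theory.
Local Open Scope ring_scope.

(* The relations defining D_d express the flows of a port as an operator A applied
   to its efforts.  Pairing a port x of D_d with an arbitrary port y, the
   efforts-against-efforts terms cancel: exchanging the order of summation makes
   the interior dual derivative the transpose of the primal one (up to sign), the
   boundary terms match by construction, and the sign (-1)^(pq+1) is the one that
   makes the two contributions opposite.  What remains is linear in the defect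
   f_y - A e_y of y, which gives D_d <= D_d^perp; pairing y with the ports of D_d
   generated by a single elementary effort then shows that the defect of every
   y in D_d^perp vanishes.  The argument is combinatorial: among the hypotheses on
   K only the fact that dK is a subcomplex of K is needed. *)

Lemma exprN1E (R : pzRingType) (k : nat) :
  (-1) ^+ k = (if odd k then -1 else 1 : R).
Proof. by rewrite -signr_odd; case: (odd k). Qed.

Section Wedge.
Variables (R : realType) (N : nat) (K : {set {set 'I_N}}) (o : {set 'I_N} -> bool).
Implicit Types (a b e f g : Defs.form R N) (s t S : {set 'I_N}).

Definition dprimT e : Defs.form R N :=
  fun s => \sum_(S in K | facet s S) incidence R o s S * e S.

Definition delta_form s0 : Defs.form R N := fun s => (s == s0)%:R.

Variable j : nat.

Lemma wedgeK_eqr a f g : (forall s, s \in K -> #|s| = j.+1 -> f s = g s) ->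
  wedgeK K j a f = wedgeK K j a g.
Proof. by move=> fg; apply: eq_bigr => s /andP[sK /eqP cs]; rewrite fg. Qed.

Lemma wedgeK_eql a f g : (forall s, s \in K -> #|s| = j.+1 -> f s = g s) ->
  wedgeK K j f a = wedgeK K j g a.
Proof. by move=> fg; apply: eq_bigr => s /andP[sK /eqP cs]; rewrite fg. Qed.

Lemma wedgeK_eq0r a f : (forall s, s \in K -> #|s| = j.+1 -> f s = 0) ->
  wedgeK K j a f = 0.
Proof. by move=> f0; apply: big1 => s /andP[sK /eqP cs]; rewrite f0 ?mulr0. Qed.

Lemma wedgeK_eq0l a f : (forall s, s \in K -> #|s| = j.+1 -> f s = 0) ->
  wedgeK K j f a = 0.
Proof. by move=> f0; apply: big1 => s /andP[sK /eqP cs]; rewrite f0 ?mul0r. Qed.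

Lemma wedgeK_subr a f g :
  wedgeK K j a (fun s => f s - g s) = wedgeK K j a f - wedgeK K j a g.
Proof. by rewrite /wedgeK -sumrB; apply: eq_bigr => s _; rewrite mulrBr. Qed.

Lemma wedgeK_subl a f g :
  wedgeK K j (fun s => f s - g s) a = wedgeK K j f a - wedgeK K j g a.
Proof. by rewrite /wedgeK -sumrB; apply: eq_bigr => s _; rewrite mulrBl. Qed.

Lemma wedgeK_deltal s0 f : s0 \in K -> #|s0| = j.+1 ->
  wedgeK K j (delta_form s0) f = f s0.
Proof.
move=> s0K cs0; rewrite /wedgeK (bigD1 s0) /=; last by rewrite s0K cs0 eqxx.
rewrite /delta_form eqxx mul1r big1 ?addr0 // => s /andP[_ /negbTE ->].
by rewrite mul0r.
Qed.

Lemma wedgeK_deltar s0 f : s0 \in K -> #|s0| = j.+1 ->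
  wedgeK K j f (delta_form s0) = f s0.
Proof.
move=> s0K cs0; rewrite -(wedgeK_deltal f s0K cs0).
by apply: eq_bigr => s _; rewrite mulrC.
Qed.

Lemma wedgeK_dprim a e :
  wedgeK K j.+1 (dprim K o a) e = wedgeK K j a (dprimT e).
Proof.
pose F s S := a s * (incidence R o s S * e S).
have -> : wedgeK K j a (dprimT e) =
    \sum_(S in K) \sum_(s in K | (#|s| == j.+1) && facet s S) F s S.
  rewrite /wedgeK /dprimT.
  under eq_bigr do rewrite big_distrr.
  rewrite (exchange_big_dep (mem K)) /=; last by move=> s S _ /andP[].
  by apply: eq_bigr => S SK; apply: eq_bigl => s; rewrite SK /= -andbA.
rewrite /wedgeK big_mkcondr /=; apply: eq_bigr => S SK.
rewrite /dprim big_distrl; case: ifP => [/eqP cS | cS].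
  apply: eq_big => [s | s _]; last by rewrite /F /=; ring.
  (* a facet of S, which has j+2 vertices, has j+1 vertices *)
  case fsS: (facet s S); rewrite ?andbF //= !andbT.
  by move: fsS => /andP[_ /eqP]; rewrite cS => -[<-]; rewrite eqxx andbT.
rewrite big1 // => s /andP[_ /andP[/eqP cs /andP[_ /eqP cSs]]].
by move: cS; rewrite cSs cs eqxx.
Qed.

Lemma wedgeK_d_i a e :
  wedgeK K j a (d_i K o e) = (-1) ^+ j.+1 * wedgeK K j a (dprimT e).
Proof.
rewrite /wedgeK mulr_sumr; apply: eq_bigr => s /andP[_ /eqP cs].
by rewrite /d_i /dprimT cs; ring.
Qed.

Variable n : nat.

Lemma wedgeB_eql a f g : (forall t, t \in bnd n K -> #|t| = j.+1 -> f t = g t) ->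
  wedgeB n K j f a = wedgeB n K j g a.
Proof. by move=> fg; apply: eq_bigr => t /andP[tb /eqP ct]; rewrite fg. Qed.

Lemma wedgeB_eq0l a f : (forall t, t \in bnd n K -> #|t| = j.+1 -> f t = 0) ->
  wedgeB n K j f a = 0.
Proof. by move=> f0; apply: big1 => t /andP[tb /eqP ct]; rewrite f0 ?mul0r. Qed.

Lemma wedgeB_eq0r a f : (forall t, t \in bnd n K -> #|t| = j.+1 -> f t = 0) ->
  wedgeB n K j a f = 0.
Proof. by move=> f0; apply: big1 => t /andP[tb /eqP ct]; rewrite f0 ?mulr0. Qed.

Lemma wedgeB_subl a f g :
  wedgeB n K j (fun t => f t - g t) a = wedgeB n K j f a - wedgeB n K j g a.
Proof. by rewrite /wedgeB -sumrB; apply: eq_bigr => t _; rewrite mulrBl. Qed.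

Lemma wedgeB_deltar t0 f : t0 \in bnd n K -> #|t0| = j.+1 ->
  wedgeB n K j f (delta_form t0) = f t0.
Proof.
move=> t0b ct0; rewrite /wedgeB (bigD1 t0) /=; last by rewrite t0b ct0 eqxx.
rewrite /delta_form eqxx mulr1 big1 ?addr0 // => t /andP[_ /negbTE ->].
by rewrite mulr0.
Qed.

Hypothesis HK : simplicial_complex K.

Lemma bnd_subset : {subset bnd n K <= K}.
Proof.
case: HK => _ faceK t; rewrite inE => /andP[t0 /existsP[r /and4P[rK _ tr _]]].
exact: faceK rK tr t0.
Qed.

Lemma wedgeK_d_b a b :
  wedgeK K j a (d_b n K b) = (-1) ^+ j * wedgeB n K j a b.
Proof.
rewrite /wedgeK /wedgeB mulr_sumr big_mkcond [RHS]big_mkcond; apply: eq_bigr => s _ /=.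
rewrite /d_b; case: (boolP (s \in bnd n K)) => [sb | _]; last first.
  by case: ifP; rewrite ?mulr0.
rewrite bnd_subset //=; case: ifP => // /eqP ->; ring.
Qed.

End Wedge.

Section DiracStructure.
Variables (R : realType) (N : nat) (K : {set {set 'I_N}}) (o : {set 'I_N} -> bool).
Hypothesis HK : simplicial_complex K.
Variables p' q' : nat.
Local Notation n := (p' + q').+1.
Local Notation Dd := (Dd n K o p'.+1 q'.+1).
Local Notation pairing := (pairing n K p'.+1 q'.+1).
Implicit Types (a b e : Defs.form R N) (x y : port R N).

Definition Dd_port a e b : port R N :=
  Port (fun s => (-1) ^+ (p'.+1 * q'.+1 + 1) * (d_i K o e s + d_b n K b s))
       (dprim K o a) (fun t => (-1) ^+ p'.+1 * a t) a e b.

Definition Dd_flows y : port R N := Dd_port (ep y) (eq y) (eb y).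

Definition defect_p y : Defs.form R N := fun s => fp y s - fp (Dd_flows y) s.
Definition defect_q y : Defs.form R N := fun S => fq y S - fq (Dd_flows y) S.
Definition defect_b y : Defs.form R N := fun t => fb y t - fb (Dd_flows y) t.

Lemma Dd_port_Dd a e b : Dd (Dd_port a e b).
Proof. by []. Qed.

Lemma Dd_defects y : Dd y <->
  [/\ forall s, s \in K -> #|s| = q'.+1 -> defect_p y s = 0,
      forall S, S \in K -> #|S| = q'.+2 -> defect_q y S = 0 &
      forall t, t \in bnd n K -> #|t| = q'.+1 -> defect_b y t = 0].
Proof.
have E : (n - p'.+1 = q')%N by lia.
rewrite /Defs.Dd E /defect_p /defect_q /defect_b.
split=> -[Dp Dq Db]; split=> s sK cs.
- by rewrite Dp ?subrr.
- by rewrite Dq ?subrr.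
- by rewrite Db ?subrr.
- exact/subr0_eq/Dp.
- exact/subr0_eq/Dq.
- exact/subr0_eq/Db.
Qed.

Lemma pairingE x y : pairing x y =
  wedgeK K q' (ep x) (fp y) + (-1) ^+ (q'.+1 * p') * wedgeK K q'.+1 (fq y) (eq x)
  + wedgeK K q' (ep y) (fp x) + (-1) ^+ (q'.+1 * p') * wedgeK K q'.+1 (fq x) (eq y)
  + (-1) ^+ (q' * p') * (wedgeB n K q' (fb y) (eb x) + wedgeB n K q' (fb x) (eb y)).
Proof.
have E1 : (n - p'.+1 = q')%N by lia.
have E2 : (n - q'.+1 = p')%N by lia.
have E3 : (n.-1 - q' = p')%N by lia.
rewrite /Defs.pairing /wedgeK_dual /wedgeB_dual E1 E2 E3; ring.
Qed.

Lemma wedgeK_fp_Dd_port a' a e b : wedgeK K q' a' (fp (Dd_port a e b)) =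
  (-1) ^+ (p'.+1 * q'.+1 + 1) *
  ((-1) ^+ q'.+1 * wedgeK K q' a' (dprimT K o e) + (-1) ^+ q' * wedgeB n K q' a' b).
Proof.
rewrite -wedgeK_d_i -wedgeK_d_b // /wedgeK -big_split mulr_sumr /=.
by apply: eq_bigr => s _; ring.
Qed.

Lemma wedgeB_fb_Dd_port a e b g :
  wedgeB n K q' (fb (Dd_port a e b)) g = (-1) ^+ p'.+1 * wedgeB n K q' a g.
Proof. by rewrite /wedgeB mulr_sumr; apply: eq_bigr => t _; rewrite mulrA. Qed.

Lemma pairing_Dd x y : Dd x ->
  pairing x y = wedgeK K q' (ep x) (defect_p y)
    + (-1) ^+ (q'.+1 * p') * wedgeK K q'.+1 (defect_q y) (eq x)
    + (-1) ^+ (q' * p') * wedgeB n K q' (defect_b y) (eb x).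
Proof.
case/Dd_defects=> dp dq db.
have fpx s : s \in K -> #|s| = q'.+1 -> fp x s = fp (Dd_flows x) s.
  by move=> sK cs; apply/subr0_eq/dp.
have fqx S : S \in K -> #|S| = q'.+2 -> fq x S = fq (Dd_flows x) S.
  by move=> SK cS; apply/subr0_eq/dq.
have fbx t : t \in bnd n K -> #|t| = q'.+1 -> fb x t = fb (Dd_flows x) t.
  by move=> tb ct; apply/subr0_eq/db.
rewrite pairingE (wedgeK_eqr _ fpx) (wedgeK_eql _ fqx) (wedgeB_eql _ fbx).
rewrite wedgeK_subr wedgeK_subl wedgeB_subl !wedgeK_fp_Dd_port !wedgeK_dprim.
rewrite !wedgeB_fb_Dd_port /=.
rewrite !exprN1E /= !(oddM, oddD) /=.
by case: (odd p'); case: (odd q'); rewrite /=; ring.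
Qed.

Lemma Dd_orthogonal x y : Dd x -> Dd y -> pairing x y = 0.
Proof.
move=> Dx /Dd_defects[dp dq db]; rewrite pairing_Dd //.
by rewrite (wedgeK_eq0r _ dp) (wedgeK_eq0l _ dq) (wedgeB_eq0l _ db) !mulr0 !addr0.
Qed.

Lemma Dd_of_orthogonal y : (forall x, Dd x -> pairing x y = 0) -> Dd y.
Proof.
move=> perp; pose z : Defs.form R N := fun _ => 0.
have perp_port a e b : pairing (Dd_port a e b) y = 0 := perp _ (Dd_port_Dd a e b).
apply/Dd_defects; split=> s sK cs.
- move: (perp_port (delta_form R s) z z); rewrite pairing_Dd // wedgeK_deltal //.
  by rewrite [wedgeK _ _ _ z]wedgeK_eq0r // [wedgeB _ _ _ _ z]wedgeB_eq0r // !mulr0 !addr0.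
- move: (perp_port z (delta_form R s) z); rewrite pairing_Dd // wedgeK_deltar //.
  rewrite [wedgeK _ _ z _]wedgeK_eq0l // [wedgeB _ _ _ _ z]wedgeB_eq0r // add0r mulr0 addr0.
  by move/eqP; rewrite mulf_eq0 signr_eq0 => /eqP.
- move: (perp_port z z (delta_form R s)); rewrite pairing_Dd // wedgeB_deltar //.
  rewrite [wedgeK _ _ z _]wedgeK_eq0l // [wedgeK _ _ _ z]wedgeK_eq0r // add0r mulr0 add0r.
  by move/eqP; rewrite mulf_eq0 signr_eq0 => /eqP.
Qed.

End DiracStructure.

Theorem theorem2 (R : realType) (N m n : nat) (K : {set {set 'I_N}})
    (o : {set 'I_N} -> bool) (x : 'I_N -> 'rV[R]_m) (p q : nat) :
  simplicial_complex K -> manifold_like n K ->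
  coherently_oriented R n K o ->
  geometric x K -> well_centered x K ->
  (0 < p)%N -> (0 < q)%N -> (p + q = n.+1)%N ->
  dirac_structure 0 (@Dd R N n K o p q) (@pairing R N n K p q).
Proof.
move=> HK _ _ _ _ p_gt0 q_gt0 pq.
case: p p_gt0 pq => // p' _; case: q q_gt0 => // q' _ pq.
have -> : n = (p' + q').+1 by lia.
move=> y; split=> [Dy x' Dx | ]; first exact: (Dd_orthogonal HK Dx Dy).
exact: (Dd_of_orthogonal (o := o) HK).
Qed.
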